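(* If $\Gamma$ is a connected mutation-finite graph with at least $4$ vertices, then every connected subgraph of $\Gamma$ with $3$ vertices is of type $\mathbf{A}_3$ or $\widehat{\mathbf{A}}_2$, i.e. is isomorphic to one of the following six graphs on vertices $1,2,3$ (all arrows single unless stated): $1\to2\to3$; $2\to1$ and $2\to3$; $1\to2$ and $3\to2$; $1\to2\to3\to1$; $1\to2\to3$ and $1\to3$; $1\to2\to3$ together with two arrows $3\to1$.
   Context: A graph here is a finite directed multigraph with no loops and no oriented $2$-cycles; multiple arrows in the same direction are allowed. The mutation $\mu_k\Gamma$ at a vertex $k$: for every pair of arrows $i\to k$, $k\to j$ add an arrow $i\to j$; reverse all arrows incident to $k$; then delete pairs of opposite arrows $i\to j$, $j\to i$ until no oriented $2$-cycles remain. $\Gamma$ is mutation-finite if only finitely many isomorphism classes of graphs are obtainable from it by sequences of mutations. Connected means the underlying undirected graph is connected. Subgraph always means full (induced) subgraph: a subset of the vertices with all arrows between them. *)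

From mathcomp Require Import all_boot all_order all_fingroup.
Set Implicit Arguments. Unset Strict Implicit. Unset Printing Implicit Defensive.

(* A graph on the vertex set 'I_n is given by its arrow counts:
   arr G i j = number of arrows i -> j. *)
Definition graph (n : nat) := 'I_n -> 'I_n -> nat.

Definition is_graph n (G : graph n) : Prop :=
  (forall i, G i i = 0) /\ (forall i j, (G i j == 0) || (G j i == 0)).

(* mutation at k, exactly as described: add i->j for each path i->k->j,
   reverse arrows at k, then cancel opposite pairs *)
Definition mutate n (k : 'I_n) (G : graph n) : graph n :=
  fun i j =>
    if (i == k) then G j i
    else if (j == k) then G k i
    else (G i j + G i k * G k j) - (G j i + G j k * G k i).

Definition mutate_seq n (ks : seq 'I_n) (G : graph n) : graph n :=
  foldl (fun H k => mutate k H) G ks.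

Definition graph_iso n (G H : graph n) : Prop :=
  exists s : {perm 'I_n}, forall i j, G (s i) (s j) = H i j.

Definition mutation_finite n (G : graph n) : Prop :=
  exists (m : nat) (L : 'I_m -> graph n),
    forall ks : seq 'I_n, exists t : 'I_m, graph_iso (mutate_seq ks G) (L t).

Definition adj n (G : graph n) : rel 'I_n :=
  fun i j => (0 < G i j) || (0 < G j i).
Definition connected n (G : graph n) : Prop :=
  forall i j : 'I_n, connect (adj G) i j.

Definition induced n m (G : graph n) (f : 'I_m -> 'I_n) : graph m :=
  fun i j => G (f i) (f j).

(* graphs on vertices {1,2,3}, encoded as ordinals 0,1,2 *)
Definition mk3 (l : seq (nat * nat * nat)) : graph 3 :=
  fun i j => \sum_(e <- l | (e.1.1 == i.+1) && (e.1.2 == j.+1)) e.2.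

(* the six graphs of type A_3 or affine A_2 (triples: source, target, multiplicity) *)
Definition A3_1 := mk3 [:: (1,2,1); (2,3,1)].
Definition A3_2 := mk3 [:: (2,1,1); (2,3,1)].
Definition A3_3 := mk3 [:: (1,2,1); (3,2,1)].
Definition A3_4 := mk3 [:: (1,2,1); (2,3,1); (3,1,1)].
Definition tA2_1 := mk3 [:: (1,2,1); (2,3,1); (1,3,1)].
Definition tA2_2 := mk3 [:: (1,2,1); (2,3,1); (3,1,2)].

Definition type_A3_or_affA2 (H : graph 3) : Prop :=
  graph_iso H A3_1 \/ graph_iso H A3_2 \/ graph_iso H A3_3 \/
  graph_iso H A3_4 \/ graph_iso H tA2_1 \/ graph_iso H tA2_2.

(* Mutation-finiteness bounds the arrow multiplicities over the whole mutation
   class, and mutation commutes with passing to a full subgraph.  Mutating an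
   oriented triangle with weights a, b, c at the vertex opposite c replaces c by
   ab - c; when all weights are at least 2 and not all equal to 2 this makes the
   total weight grow forever, and one or two further mutations reduce the
   triangles with a single arrow to this case.  What survives, up to rotation, are the
   weights (1,1,1), (1,1,2) and (2,2,2).  One mutation turns an oriented path or
   a source/sink star into a triangle, which forces single arrows there.  Last,
   a (2,2,2) triangle has no neighbour: a neighbouring vertex would give some
   vertex of the triangle two outgoing or two incoming arrows, one of them
   double. *)

From mathcomp Require Import all_boot all_order all_fingroup.
From mathcomp Require Import zify.
Set Implicit Arguments. Unset Strict Implicit. Unset Printing Implicit Defensive.

Definition mutation_bounded n (B : nat) (G : graph n) : Prop :=
  forall ks i j, mutate_seq ks G i j <= B.

Lemma mutation_finite_bounded n (G : graph n) :
  mutation_finite G -> exists B, mutation_bounded B G.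
Proof.
case=> m [L isoL].
exists (\max_(t < m) \max_(i < n) \max_(j < n) L t i j) => ks i j.
have [t [s Ls]] := isoL ks.
rewrite -[i](permKV s) -[j](permKV s) Ls.
apply: (leq_trans _ (leq_bigmax t)); apply: (leq_trans _ (leq_bigmax _)).
exact: leq_bigmax.
Qed.

Lemma mutation_bounded_le n B (G : graph n) i j :
  mutation_bounded B G -> G i j <= B.
Proof. by move/(_ [::]). Qed.

Lemma mutation_bounded_mutate n B (G : graph n) k :
  mutation_bounded B G -> mutation_bounded B (mutate k G).
Proof. by move=> bG ks; apply: (bG (k :: ks)). Qed.

Lemma mutate_ext n (G G' : graph n) k : G =2 G' -> mutate k G =2 mutate k G'.
Proof. by move=> eG i j; rewrite /mutate !eG. Qed.

Lemma mutate_seq_ext n (G G' : graph n) ks :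
  G =2 G' -> mutate_seq ks G =2 mutate_seq ks G'.
Proof.
elim: ks G G' => [|k ks IH] G G' eG //=.
exact/IH/mutate_ext.
Qed.

Section Induced.
Variables (n m : nat) (f : 'I_m -> 'I_n).
Hypothesis f_inj : injective f.

Lemma induced_mutate (G : graph n) k :
  induced (mutate (f k) G) f =2 mutate k (induced G f).
Proof. by move=> i j; rewrite /induced /mutate !(inj_eq f_inj). Qed.

Lemma induced_mutate_seq (G : graph n) ks :
  induced (mutate_seq (map f ks) G) f =2 mutate_seq ks (induced G f).
Proof.
elim: ks G => [|k ks IH] G i j //=.
by rewrite IH; apply: mutate_seq_ext; apply: induced_mutate.
Qed.

Lemma mutation_bounded_induced B (G : graph n) :
  mutation_bounded B G -> mutation_bounded B (induced G f).
Proof. by move=> bG ks i j; rewrite -induced_mutate_seq; apply: bG. Qed.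

End Induced.

Section MutationRules.
Variables (n : nat) (G : graph n) (k : 'I_n).

Lemma mutate_from j : mutate k G k j = G j k.
Proof. by rewrite /mutate eqxx. Qed.

Lemma mutate_to i : i != k -> mutate k G i k = G k i.
Proof. by rewrite /mutate eqxx => /negbTE ->. Qed.

Lemma mutate_off i j : i != k -> j != k ->
  mutate k G i j = (G i j + G i k * G k j) - (G j i + G j k * G k i).
Proof. by rewrite /mutate => /negbTE -> /negbTE ->. Qed.

End MutationRules.

Lemma is_graph_asym n (G : graph n) i j : is_graph G -> 0 < G i j -> G j i = 0.
Proof. by case=> _ /(_ i j) /orP[] /eqP; lia. Qed.

Lemma is_graph_cases n (G : graph n) i j : is_graph G ->
  [\/ G i j = 0 /\ G j i = 0, 0 < G i j /\ G j i = 0 | G i j = 0 /\ 0 < G j i].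
Proof.
case=> _ /(_ i j); case: (G i j) => [|p]; case: (G j i) => [|q] //= _.
- by constructor 1.
- by constructor 3.
- by constructor 2.
Qed.

Lemma is_graph_mutate n (G : graph n) k : is_graph G -> is_graph (mutate k G).
Proof.
case=> G0 Gasym; split=> [i|i j]; rewrite /mutate.
  by case: (i =P k) => [->|_]; rewrite ?G0 ?subnn.
case: (i =P k) => [->|ik]; case: (j =P k) => [->|jk] //=; rewrite ?eqxx ?G0 //.
by rewrite !subn_eq0 leq_total.
Qed.

Lemma is_graph_induced n m (G : graph n) (f : 'I_m -> 'I_n) :
  is_graph G -> is_graph (induced G f).
Proof. by case=> G0 Gasym; split=> [i|i j]; rewrite /induced. Qed.

Definition oriented_triangle n (G : graph n) x y z a b c : Prop :=
  [/\ x != y, y != z, z != x, G x y = a & G y z = b] /\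
  [/\ G z x = c, G y x = 0, G z y = 0 & G x z = 0].

Lemma oriented_triangle_rot n (G : graph n) x y z a b c :
  oriented_triangle G x y z a b c -> oriented_triangle G y z x b c a.
Proof. by case=> [[? ? ? ? ?] [? ? ? ?]]. Qed.

Lemma oriented_triangle_induced n m (G : graph n) (f : 'I_m -> 'I_n) x y z a b c :
  injective f -> oriented_triangle (induced G f) x y z a b c ->
  oriented_triangle G (f x) (f y) (f z) a b c.
Proof. by move=> f_inj [[? ? ? ? ?] [? ? ? ?]]; split; split; rewrite ?(inj_eq f_inj). Qed.

Lemma mutate_oriented_triangle n (G : graph n) x y z a b c :
  oriented_triangle G x y z a b c -> c <= a * b ->
  oriented_triangle (mutate y G) x z y (a * b - c) b a.
Proof.
case=> [[xy yz zx Gxy Gyz] [Gzx Gyx Gzy Gxz]] c_le.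
have zy : z != y by rewrite eq_sym.
rewrite /oriented_triangle !mutate_from !mutate_to // !mutate_off //.
rewrite Gxy Gyz Gzx Gyx Gzy Gxz.
by split; split; rewrite 1?eq_sym //; lia.
Qed.

Section BoundedMutationClass.
Variables (n B : nat).

Lemma bounded_triangle_sum (G : graph n) x y z a b c :
  mutation_bounded B G -> oriented_triangle G x y z a b c ->
  2 <= a -> 2 <= b -> 2 <= c -> a + b + c <= 6.
Proof.
move=> bG T ha hb hc; rewrite leqNgt; apply/negP => h7.
have [k] := ubnP (3 * B - (a + b + c)).
elim: k => // k IH in G x y z a b c bG T ha hb hc h7 *.
wlog [ca cb] : x y z a b c T ha hb hc h7 / c <= a /\ c <= b.
  move=> W lt_k.
  have [|[[ab ac]|[ba bc]]] : (c <= a /\ c <= b) \/ (a <= b /\ a <= c) \/ (b <= a /\ b <= c)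
    by lia.
  - by move=> min_c; apply: W T _ _ _ _ _ _.
  - by apply: W (oriented_triangle_rot T) _ _ _ _ _ _ => //; lia.
  - by apply: W (oriented_triangle_rot (oriented_triangle_rot T)) _ _ _ _ _ _ => //; lia.
move=> lt_k.
have le_cab : c <= a * b by nia.
have T' := mutate_oriented_triangle T le_cab.
have bG' := mutation_bounded_mutate y bG.
case: (T) (T') => [[_ _ _ Gxy Gyz] _] [[_ _ _ Gxz _] _].
have := mutation_bounded_le x z bG'; have := mutation_bounded_le y z bG.
have := mutation_bounded_le x y bG; rewrite Gxy Gyz Gxz => aB bB abB.
(* mutating at the vertex opposite the smallest weight makes the sum of weights grow *)
apply: IH bG' T' _ hb ha _ _; nia.
Qed.

Lemma bounded_triangle_one_between (G : graph n) x y z a c :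
  mutation_bounded B G -> oriented_triangle G x y z a 1 c -> 2 <= a -> 2 <= c -> False.
Proof.
move=> bG T ha hc.
have T' : oriented_triangle (mutate x G) z y x (c * a - 1) a c.
  by apply: mutate_oriented_triangle (oriented_triangle_rot (oriented_triangle_rot T)) _; nia.
have := bounded_triangle_sum (mutation_bounded_mutate x bG) T'; nia.
Qed.

Lemma bounded_triangle_two_ones (G : graph n) x y z c :
  mutation_bounded B G -> oriented_triangle G x y z 1 1 c -> c <= 2.
Proof.
move=> bG T; rewrite leqNgt; apply/negP => hc.
have T' : oriented_triangle (mutate x G) z y x (c * 1 - 1) 1 c.
  by apply: mutate_oriented_triangle (oriented_triangle_rot (oriented_triangle_rot T)) _; lia.
apply: bounded_triangle_one_between (mutation_bounded_mutate x bG) T' _ _; lia.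
Qed.

Lemma bounded_triangle_weights (G : graph n) x y z a b c :
  mutation_bounded B G -> oriented_triangle G x y z a b c -> 0 < a -> 0 < b -> 0 < c ->
  [\/ (a, b, c) = (1, 1, 1), (a, b, c) = (2, 2, 2)
     | [\/ (a, b, c) = (1, 1, 2), (a, b, c) = (1, 2, 1) | (a, b, c) = (2, 1, 1)]].
Proof.
move=> bG T ha hb hc; have T1 := oriented_triangle_rot T.
have T2 := oriented_triangle_rot T1.
have [ea|a2] : a = 1 \/ 2 <= a by lia.
all: have [eb|b2] : b = 1 \/ 2 <= b by lia.
all: have [ec|c2] : c = 1 \/ 2 <= c by lia.
all: subst.
- by constructor 1.
- have -> : c = 2 by have := bounded_triangle_two_ones bG T; lia.
  by apply/Or33/Or31.
- have -> : b = 2 by have := bounded_triangle_two_ones bG T2; lia.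
  by apply/Or33/Or32.
- by case: (bounded_triangle_one_between bG T2 c2 b2).
- have -> : a = 2 by have := bounded_triangle_two_ones bG T1; lia.
  by apply/Or33/Or33.
- by case: (bounded_triangle_one_between bG T a2 c2).
- by case: (bounded_triangle_one_between bG T1 b2 a2).
- have := bounded_triangle_sum bG T a2 b2 c2 => sum6.
  have [-> -> ->] : [/\ a = 2, b = 2 & c = 2] by split; lia.
  by constructor 2.
Qed.

Lemma bounded_path_single (G : graph n) u v t :
  is_graph G -> mutation_bounded B G -> u != v -> v != t -> u != t ->
  0 < G u v -> 0 < G v t -> G t u = 0 -> [/\ G u v = 1, G v t = 1 & G u t <= 1].
Proof.
move=> gG bG uv vt ut Guv Gvt Gtu.
have Gvu := is_graph_asym gG Guv; have Gtv := is_graph_asym gG Gvt.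
(* mutating at the middle vertex closes the path into an oriented triangle *)
have T : oriented_triangle (mutate v G) u t v (G u v * G v t + G u t) (G v t) (G u v).
  have tv : t != v by rewrite eq_sym.
  have vu : v != u by rewrite eq_sym.
  rewrite /oriented_triangle !mutate_from !mutate_to // !mutate_off //.
  rewrite Gvu Gtv Gtu; split; split => //; lia.
have pos : 0 < G u v * G v t + G u t by rewrite addn_gt0 muln_gt0 Guv Gvt.
by case: (bounded_triangle_weights (mutation_bounded_mutate v bG) T pos Gvt Guv)
  => [e|e|[e|e|e]]; case: e => *; split; nia.
Qed.

Lemma bounded_out_single (G : graph n) x y w :
  is_graph G -> mutation_bounded B G -> x != y -> x != w -> y != w ->
  0 < G x y -> 0 < G x w -> G x y = 1.
Proof.
move=> gG bG xy xw yw Gxy Gxw.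
have Gyx := is_graph_asym gG Gxy; have Gwx := is_graph_asym gG Gxw.
have yx : y != x by rewrite eq_sym.
have wy : w != y by rewrite eq_sym.
have [[Gyw Gwy]|[Gyw Gwy]|[Gyw Gwy]] := is_graph_cases y w gG.
- (* mutating at y turns the two outgoing arrows into a path y -> x -> w *)
  have := @bounded_path_single (mutate y G) y x w (is_graph_mutate y gG)
    (mutation_bounded_mutate y bG) yx xw yw.
  rewrite mutate_from mutate_to // mutate_off // Gyw Gwy Gyx Gwx !muln0 !subn0.
  by rewrite addn0 => /(_ Gxy Gxw erefl) [].
- by case: (bounded_path_single gG bG xy yw xw Gxy Gyw Gwx).
- by case: (bounded_path_single gG bG xw wy xy Gxw Gwy Gyx) => _ _; lia.
Qed.

Lemma bounded_in_single (G : graph n) x y w :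
  is_graph G -> mutation_bounded B G -> x != y -> x != w -> y != w ->
  0 < G y x -> 0 < G w x -> G y x = 1.
Proof.
move=> gG bG xy xw yw Gyx Gwx.
have Gxy := is_graph_asym gG Gyx; have Gxw := is_graph_asym gG Gwx.
have wx : w != x by rewrite eq_sym.
have yx : y != x by rewrite eq_sym.
have wy : w != y by rewrite eq_sym.
have [[Gyw Gwy]|[Gyw Gwy]|[Gyw Gwy]] := is_graph_cases y w gG.
- (* mutating at y turns the two incoming arrows into a path w -> x -> y *)
  have := @bounded_path_single (mutate y G) w x y (is_graph_mutate y gG)
    (mutation_bounded_mutate y bG) wx xy wy.
  rewrite mutate_from mutate_to // mutate_off // Gyw Gwy Gxy Gxw !muln0 !subn0 addn0.
  by move=> /(_ Gwx Gyx erefl) [].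
- by case: (bounded_path_single gG bG yw wx yx Gyw Gwx Gxy) => _ _; lia.
- by case: (bounded_path_single gG bG wy yx wx Gwy Gyx Gxw).
Qed.

End BoundedMutationClass.

Lemma markov_triangle_isolated n B (G : graph n) x y z w :
  is_graph G -> mutation_bounded B G -> oriented_triangle G x y z 2 2 2 ->
  w != x -> w != y -> w != z -> ~~ adj G x w.
Proof.
move=> gG bG [[xy yz zx Gxy _] [Gzx _ _ _]] wx wy wz.
rewrite !(eq_sym w) in wx wy wz; rewrite eq_sym in zx.
(* the doubled arrows x -> y and z -> x would have to be single *)
apply/negP => /orP[Gxw|Gwx].
- by have := bounded_out_single gG bG xy wx wy _ Gxw; rewrite Gxy => /(_ isT).
- by have := bounded_in_single gG bG zx wx wz _ Gwx; rewrite Gzx => /(_ isT).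
Qed.

Lemma adjC n (G : graph n) : symmetric (adj G).
Proof. by move=> i j; rewrite /adj orbC. Qed.

Lemma connect_exit (T : finType) (e : rel T) (S : {set T}) a b :
  connect e a b -> a \in S -> b \notin S -> exists u v, [/\ u \in S, v \notin S & e u v].
Proof.
case/connectP => p; elim: p a => [|c p IH] a /=; first by move=> _ -> ->.
case/andP => eac pth lastb aS bS.
by case: (boolP (c \in S)) => cS; [apply: IH pth lastb cS bS | exists a, c].
Qed.

Lemma connected_exit n (G : graph n) (S : {set 'I_n}) x :
  connected G -> x \in S -> #|S| < n -> exists u v, [/\ u \in S, v \notin S & adj G u v].
Proof.
move=> cG xS small_S.
have [y _ yS] : exists2 y, y \in [set: 'I_n] & y \notin S.
  apply/subsetPn; apply: contraTN small_S => /subset_leq_card.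
  by rewrite cardsT card_ord -leqNgt.
exact: connect_exit (cG x y) xS yS.
Qed.

Lemma bounded_connected_no_markov_triangle n B (G : graph n) x y z :
  is_graph G -> mutation_bounded B G -> connected G -> 4 <= n ->
  ~ oriented_triangle G x y z 2 2 2.
Proof.
move=> gG bG cG n4 T.
have T1 := oriented_triangle_rot T; have T2 := oriented_triangle_rot T1.
have card3 : #|[set x; y; z]| < n.
  by apply: leq_ltn_trans n4; rewrite cardsU cards2 cards1; case: (x != y); lia.
have xS : x \in [set x; y; z] by rewrite !inE eqxx.
have [u [w [uS wS uw]]] := connected_exit cG xS card3.
move: wS uS uw; rewrite !inE !negb_or => /andP[/andP[wx wy] wz] /orP[/orP[]|] /eqP ->.
- by apply/negP: (markov_triangle_isolated gG bG T wx wy wz).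
- by apply/negP: (markov_triangle_isolated gG bG T1 wy wz wx).
- by apply/negP: (markov_triangle_isolated gG bG T2 wz wx wy).
Qed.

Lemma connected_center n (G : graph n) (x : 'I_n) : connected G -> 2 < n ->
  exists u v t, [/\ u != v, v != t, u != t, adj G v u & adj G v t].
Proof.
move=> cG n3.
have card1 : #|[set x]| < n by rewrite cards1; lia.
have [x' [w [/set1P -> wx xw]]] := connected_exit cG (set11 x) card1.
rewrite inE in wx.
have xS : x \in [set x; w] by rewrite !inE eqxx.
have card2 : #|[set x; w]| < n by rewrite cards2; case: (x != w); lia.
have [p [q []]] := connected_exit cG xS card2.
rewrite !inE !negb_or => /orP[] /eqP -> /andP[qx qw] pq.
- by exists w, x, q; rewrite wx xw pq !(eq_sym _ q) qx qw.
- by exists x, w, q; rewrite (eq_sym x) wx adjC xw pq !(eq_sym _ q) qx qw.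
Qed.

Lemma center_shape n (G : graph n) u v t :
  is_graph G -> u != v -> v != t -> u != t -> adj G v u -> adj G v t ->
  exists u' v' t', [/\ u' != v', v' != t' & u' != t'] /\
    [\/ [/\ 0 < G v' u', 0 < G v' t', G u' t' = 0 & G t' u' = 0],
        [/\ 0 < G u' v', 0 < G t' v', G u' t' = 0 & G t' u' = 0],
        [/\ 0 < G u' v', 0 < G v' t' & G t' u' = 0]
      | [/\ 0 < G u' v', 0 < G v' t' & 0 < G t' u']].
Proof.
move=> gG uv vt ut avu avt.
have vu : v != u by rewrite eq_sym.
have tv : t != v by rewrite eq_sym.
have tu : t != u by rewrite eq_sym.
have [[Gvu Guv]|[Gvu Guv]|[Gvu Guv]] := is_graph_cases v u gG;
  first by move: avu; rewrite /adj Gvu Guv.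
all: have [[Gvt Gtv]|[Gvt Gtv]|[Gvt Gtv]] := is_graph_cases v t gG;
  first by move: avt; rewrite /adj Gvt Gtv.
all: have [[Gut Gtu]|[Gut Gtu]|[Gut Gtu]] := is_graph_cases u t gG.
- by exists u, v, t; split => //; apply: Or41.
- by exists v, u, t; split => //; apply: Or43.
- by exists v, t, u; split => //; apply: Or43.
- by exists t, v, u; split => //; apply: Or43.
- by exists t, v, u; split => //; apply: Or44.
- by exists t, v, u; split => //; apply: Or43.
- by exists u, v, t; split => //; apply: Or43.
- by exists u, v, t; split => //; apply: Or43.
- by exists u, v, t; split => //; apply: Or44.
- by exists u, v, t; split => //; apply: Or42.
- by exists u, t, v; split => //; apply: Or43.
- by exists t, u, v; split => //; apply: Or43.
Qed.

Local Notation i0 := (@Ordinal 3 0 isT).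
Local Notation i1 := (@Ordinal 3 1 isT).
Local Notation i2 := (@Ordinal 3 2 isT).

Lemma ord3P (i : 'I_3) : [\/ i = i0, i = i1 | i = i2].
Proof.
by case: i => [[|[|[|//]]] lt_i]; [apply: Or31 | apply: Or32 | apply: Or33];
  apply: val_inj.
Qed.

Lemma graph_iso3 (H K : graph 3) u v t :
  is_graph H -> u != v -> v != t -> u != t ->
  [/\ K i0 i0 = 0, K i1 i1 = 0 & K i2 i2 = 0] ->
  [/\ H u v = K i0 i1, H v t = K i1 i2 & H t u = K i2 i0] ->
  [/\ H v u = K i1 i0, H t v = K i2 i1 & H u t = K i0 i2] ->
  graph_iso H K.
Proof.
move=> [H0 _] uv vt ut [K00 K11 K22] [Kuv Kvt Ktu] [Kvu Ktv Kut].
pose label (i : 'I_3) := nth u [:: u; v; t] i.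
have label_inj : injective label.
  move=> i j; rewrite /label.
  by case: (ord3P i) => ->; case: (ord3P j) => -> //= e;
    move: uv vt ut; rewrite e eqxx.
exists (perm label_inj) => i j; rewrite !permE /label.
by case: (ord3P i) => ->; case: (ord3P j) => ->; rewrite /= ?H0.
Qed.

Local Ltac mk3_eval :=
  rewrite /A3_1 /A3_2 /A3_3 /A3_4 /tA2_1 /tA2_2 /mk3 unlock /=; split; rewrite ?addn0 //.

Lemma bounded_connected3_classification B (H : graph 3) :
  is_graph H -> connected H -> mutation_bounded B H ->
  type_A3_or_affA2 H \/ exists u v t, oriented_triangle H u v t 2 2 2.
Proof.
move=> gH cH bH.
have [u0 [v0 [t0 [uv0 vt0 ut0 vu0 vt0']]]] := connected_center i0 cH isT.
have [u [v [t [[uv vt ut] shape]]]] := center_shape gH uv0 vt0 ut0 vu0 vt0'.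
have vu : v != u by rewrite eq_sym.
have tv : t != v by rewrite eq_sym.
have tu : t != u by rewrite eq_sym.
have iso := graph_iso3 gH; rewrite /type_A3_or_affA2.
case: shape => [[Hvu Hvt Hut Htu]|[Huv Htv Hut Htu]|[Huv Hvt Htu]|[Huv Hvt Htu]].
- have Huv := is_graph_asym gH Hvu; have Htv := is_graph_asym gH Hvt.
  have Hvu1 := bounded_out_single gH bH vu vt ut Hvu Hvt.
  have Hvt1 := bounded_out_single gH bH vt vu tu Hvt Hvu.
  left; right; left.
  by apply: iso uv vt ut _ _ _; mk3_eval.
- have Hvu := is_graph_asym gH Huv; have Hvt := is_graph_asym gH Htv.
  have Huv1 := bounded_in_single gH bH vu vt ut Huv Htv.
  have Htv1 := bounded_in_single gH bH vt vu tu Htv Huv.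
  left; do 2 right; left.
  by apply: iso uv vt ut _ _ _; mk3_eval.
- have Hvu := is_graph_asym gH Huv; have Htv := is_graph_asym gH Hvt.
  have [Huv1 Hvt1 Hut] := bounded_path_single gH bH uv vt ut Huv Hvt Htu.
  have [Hut0|Hut1] : H u t = 0 \/ H u t = 1 by lia.
  + by left; left; apply: iso uv vt ut _ _ _; mk3_eval.
  + left; do 4 right; left.
    by apply: iso uv vt ut _ _ _; mk3_eval.
- have Hvu := is_graph_asym gH Huv; have Htv := is_graph_asym gH Hvt.
  have Hut := is_graph_asym gH Htu.
  have T : oriented_triangle H u v t (H u v) (H v t) (H t u) by [].
  case: (bounded_triangle_weights bH T Huv Hvt Htu) => [e|e|[e|e|e]];
    case: e => Huv1 Hvt1 Htu1.
  + left; do 3 right; left.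
    by apply: iso uv vt ut _ _ _; mk3_eval.
  + by right; exists u, v, t; move: T; rewrite Huv1 Hvt1 Htu1.
  + left; do 5 right.
    by apply: iso uv vt ut _ _ _; mk3_eval.
  + left; do 5 right.
    by apply: iso tu uv tv _ _ _; mk3_eval.
  + left; do 5 right.
    by apply: iso vt tu vu _ _ _; mk3_eval.
Qed.

Theorem corollary8 (n : nat) (G : graph n) :
  is_graph G -> connected G -> mutation_finite G -> 4 <= n ->
  forall f : 'I_3 -> 'I_n, injective f -> connected (induced G f) ->
  type_A3_or_affA2 (induced G f).
Proof.
move=> gG cG mfG n4 f f_inj cH.
have [B bG] := mutation_finite_bounded mfG.
have bH := mutation_bounded_induced f_inj bG.
case: (bounded_connected3_classification (is_graph_induced f gG) cH bH) => // [[u [v [t T]]]].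
by case: (bounded_connected_no_markov_triangle gG bG cG n4 (oriented_triangle_induced f_inj T)).
Qed.
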